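(* Let $X$ be a compact metric space and $f\colon X\to X$ continuous. If $(X,f)$ has any one of the following properties, then it has property $P_e$: (1) two-sided limit shadowing; (2) two-sided orbital limit shadowing; (3) $\delta$-restricted two-sided orbital limit shadowing.
   Context: A full trajectory is a sequence $\langle x_i\rangle_{i\in\mathbb Z}$ in $X$ with $f(x_i)=x_{i+1}$ for all $i$. For a two-sided sequence, $\omega(\langle x_i\rangle)=\bigcap_{M\in\mathbb N}\overline{\{x_n:n>M\}}$, $\alpha(\langle x_i\rangle)=\bigcap_{M\in\mathbb N}\overline{\{x_n:n<-M\}}$. $ICT_f$ is the set of nonempty closed internally chain transitive sets, where $A$ is internally chain transitive if for all $a,b\in A$ and $\delta>0$ there exist $x_0=a,\dots,x_N=b$ in $A$, $N\ge1$, with $d(f(x_i),x_{i+1})<\delta$. Property $P_e$: for every $A\in ICT_f$ there is a full trajectory $\langle x_i\rangle$ with $\alpha(\langle x_i\rangle)=\omega(\langle x_i\rangle)=A$. A two-sided asymptotic pseudo-orbit is $\langle x_i\rangle_{i\in\mathbb Z}$ with $d(f(x_i),x_{i+1})\to0$ as $i\to\pm\infty$; it is a two-sided asymptotic $\delta$-pseudo-orbit if moreover $d(f(x_i),x_{i+1})<\delta$ for all $i\in\mathbb Z$. Two-sided limit shadowing: every two-sided asymptotic pseudo-orbit $\langle x_i\rangle$ admits a full trajectory $\langle z_i\rangle$ with $d(z_i,x_i)\to0$ as $i\to\pm\infty$. Two-sided orbital limit shadowing: every two-sided asymptotic pseudo-orbit $\langle x_i\rangle$ admits a full trajectory $\langle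 z_i\rangle$ with $\alpha(\langle z_i\rangle)=\alpha(\langle x_i\rangle)$ and $\omega(\langle z_i\rangle)=\omega(\langle x_i\rangle)$. $\delta$-restricted two-sided orbital limit shadowing: there exists $\delta>0$ such that every two-sided asymptotic $\delta$-pseudo-orbit $\langle x_i\rangle$ admits a full trajectory $\langle z_i\rangle$ with $\alpha(\langle z_i\rangle)=\alpha(\langle x_i\rangle)$ and $\omega(\langle z_i\rangle)=\omega(\langle x_i\rangle)$. *)

(* A metric space X is a (Hausdorff) pseudoMetricType
   over a realType R; d(x,y) < e is expressed as ball x e y. *)
From HB Require Import structures.
From mathcomp Require Import all_boot all_order all_algebra.
From mathcomp Require Import all_classical all_reals all_analysis.
Set Implicit Arguments. Unset Strict Implicit. Unset Printing Implicit Defensive.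
Import Order.TTheory GRing.Theory Num.Theory.
Local Open Scope classical_set_scope.
Local Open Scope ring_scope.

Section Dyn.
Context {R : realType} {X : pseudoMetricType R}.

Definition full_trajectory (f : X -> X) (x : int -> X) : Prop :=
  forall i : int, f (x i) = x (i + 1).

Definition omega_lim (x : int -> X) : set X :=
  [set y | forall M : nat, closure [set x n | n in [set n : int | M%:Z < n]] y].

Definition alpha_lim (x : int -> X) : set X :=
  [set y | forall M : nat, closure [set x n | n in [set n : int | n < - M%:Z]] y].

Definition ICT (f : X -> X) (A : set X) : Prop :=
  forall a b, A a -> A b -> forall delta : R, 0 < delta ->
    exists (N : nat) (c : nat -> X), (1 <= N)%N /\ c 0%N = a /\ c N = b /\
      (forall i : nat, (i <= N)%N -> A (c i)) /\
      (forall i : nat, (i < N)%N -> ball (f (c i)) delta (c i.+1)).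

Definition ICT_set (f : X -> X) (A : set X) : Prop :=
  A !=set0 /\ closed A /\ ICT f A.

Definition property_Pe (f : X -> X) : Prop :=
  forall A, ICT_set f A ->
    exists x : int -> X, full_trajectory f x /\ alpha_lim x = A /\ omega_lim x = A.

Definition two_sided_asym_pseudo_orbit (f : X -> X) (x : int -> X) : Prop :=
  forall e : R, 0 < e -> exists N : nat, forall i : int,
    N%:Z < `|i| -> ball (f (x i)) e (x (i + 1)).

Definition two_sided_asym_delta_pseudo_orbit (f : X -> X) (delta : R)
    (x : int -> X) : Prop :=
  two_sided_asym_pseudo_orbit f x /\
  forall i : int, ball (f (x i)) delta (x (i + 1)).

Definition two_sided_limit_shadowing (f : X -> X) : Prop :=
  forall x : int -> X, two_sided_asym_pseudo_orbit f x ->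
    exists z : int -> X, full_trajectory f z /\
      forall e : R, 0 < e -> exists N : nat, forall i : int,
        N%:Z < `|i| -> ball (z i) e (x i).

Definition two_sided_orbital_limit_shadowing (f : X -> X) : Prop :=
  forall x : int -> X, two_sided_asym_pseudo_orbit f x ->
    exists z : int -> X, full_trajectory f z /\
      alpha_lim z = alpha_lim x /\ omega_lim z = omega_lim x.

Definition restricted_two_sided_orbital_limit_shadowing (f : X -> X) : Prop :=
  exists delta : R, 0 < delta /\
    forall x : int -> X, two_sided_asym_delta_pseudo_orbit f delta x ->
      exists z : int -> X, full_trajectory f z /\
        alpha_lim z = alpha_lim x /\ omega_lim z = omega_lim x.

End Dyn.

From HB Require Import structures.
From mathcomp Require Import all_boot all_order all_algebra.
From mathcomp Require Import all_classical all_reals all_analysis.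
From mathcomp Require Import zify.
Set Implicit Arguments. Unset Strict Implicit. Unset Printing Implicit Defensive.
Import Order.TTheory GRing.Theory Num.Theory.
Local Open Scope classical_set_scope.
Local Open Scope ring_scope.

(* Let A be in ICT_f and fix p in A.  For each k, compactness gives a finite
   eps_k-net of A and internal chain transitivity an eps_k-pseudo-orbit loop
   in A from p to p through that net, where eps_k <= delta decreases to 0.
   Running these loops one after the other forwards in time, and backwards in
   time for negative indices, gives a two-sided asymptotic delta-pseudo-orbit
   whose alpha- and omega-limit sets are both A.  Orbital limit shadowing turns
   it into a full trajectory with the same limit sets; limit shadowing does
   too, since asymptotic sequences have the same limit sets. *)

Section LoopPositions.
Variable len : nat -> nat.
Hypothesis len_gt0 : forall k, (0 < len k)%N.

Definition next_pos (kj : nat * nat) : nat * nat :=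
  if (kj.2.+1 < len kj.1)%N then (kj.1, kj.2.+1) else (kj.1.+1, 0%N).

(* [loop_pos n = (k, j)]: the n-th point of the concatenation of loops of
   lengths [len 0], [len 1], ... is the j-th point of the k-th loop. *)
Definition loop_pos (n : nat) : nat * nat := iter n next_pos (0%N, 0%N).

Lemma loop_pos_snd_lt n : ((loop_pos n).2 < len (loop_pos n).1)%N.
Proof.
elim: n => [|n IH] /=; first exact: len_gt0.
by rewrite /next_pos; case: ifP => //= _; exact: len_gt0.
Qed.

Lemma loop_pos_fst_homo : {homo (fun n => (loop_pos n).1) : m n / (m <= n)%N}.
Proof.
apply: homo_leq => [//||n]; first exact: leq_trans.
by rewrite /= /next_pos; case: ifP => //= _; rewrite leqnSn.
Qed.

Lemma loop_pos_run n k j : loop_pos n = (k, 0%N) -> (j < len k)%N ->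
  loop_pos (n + j) = (k, j).
Proof.
move=> nk; elim: j => [|j IH] jk; first by rewrite addn0.
by rewrite addnS /= IH 1?ltnW // /next_pos /= jk.
Qed.

Lemma loop_pos_reach k : exists n, loop_pos n = (k, 0%N).
Proof.
elim: k => [|k [n nk]]; first by exists 0%N.
exists (n + len k)%N; have := len_gt0 k; case lenk: (len k) => [//|j] _.
by rewrite addnS /= (loop_pos_run nk) ?lenk // /next_pos /= lenk ltnn.
Qed.

Lemma loop_pos_fst_cvg : (fun n => (loop_pos n).1) @ \oo --> \oo.
Proof.
move=> P [K _ KP]; have [n0 n0K] := loop_pos_reach K.
exists n0 => // n n0n; apply: KP => /=.
by have := loop_pos_fst_homo n0n; rewrite n0K.
Qed.

Section Concat.
Variables (T : eqType) (p : T) (L : nat -> seq T).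
Hypotheses (size_L : forall k, size (L k) = len k) (L_loop : forall k, last p (L k) = p).

Definition concat_loops (n : nat) : T := nth p (p :: L (loop_pos n).1) (loop_pos n).2.

Lemma concat_loops_in (P : T -> Prop) :
  P p -> (forall k a, a \in L k -> P a) -> forall n, P (concat_loops n).
Proof.
move=> Pp PL n; rewrite /concat_loops.
by case: (loop_pos n) (loop_pos_snd_lt n) => k [//|j] /= jk;
  apply: (PL k); rewrite mem_nth // size_L ltnW.
Qed.

Lemma concat_loops_step (r : nat -> rel T) : (forall k, path (r k) p (L k)) ->
  forall n, r (loop_pos n).1 (concat_loops n) (concat_loops n.+1).
Proof.
move=> rL n; rewrite /concat_loops /= /next_pos.
case: (loop_pos n) (loop_pos_snd_lt n) => k j /= jk.
have /pathP := rL k => /(_ p) rLk.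
case: ifP => /= jk'; first by apply: rLk; rewrite size_L.
have lastE : nth p (L k) j = p.
  by rewrite -[RHS](L_loop k) -nth_last size_L; congr nth; lia.
by rewrite -[X in r _ _ X]lastE; apply: rLk; rewrite size_L.
Qed.

Lemma concat_loops_visit k a M : a \in p :: L k -> ((loop_pos M).1 < k)%N ->
  exists2 n, (M < n)%N & concat_loops n = a.
Proof.
move=> aL Mk; suff [n nk <-] : exists2 n, (k <= (loop_pos n).1)%N &
    concat_loops n = a.
  by exists n => //; rewrite ltnNge; apply: contraTN Mk => /loop_pos_fst_homo; lia.
have [n nk] := loop_pos_reach k; have [n' n'k] := loop_pos_reach k.+1.
have := index_mem a (p :: L k); rewrite aL /= ltnS leq_eqVlt size_L.
case/orP => [/eqP ai | ai].
  (* the last point of loop k is the first point of loop k + 1 *)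
  exists n'; rewrite ?n'k // /concat_loops n'k /=.
  by rewrite -(L_loop k) (last_nth p) size_L -ai nth_index.
by exists (n + index a (p :: L k))%N;
  rewrite /concat_loops (loop_pos_run nk) ?nth_index.
Qed.
End Concat.
End LoopPositions.

Lemma last_rev_belast (T : Type) (p : T) (s : seq T) : last p (rev (belast p s)) = p.
Proof. by case: s => //= a s; rewrite rev_cons last_rcons. Qed.

Lemma mem_rev_belast (T : eqType) (p : T) (s : seq T) :
  last p s = p -> p :: rev (belast p s) =i p :: s.
Proof. by move=> sp a; rewrite [p :: s]lastI sp mem_rcons !in_cons mem_rev. Qed.

Section Dynamics.
Context {R : realType} {X : pseudoMetricType R} (f : X -> X).

Definition pseudo_step (e : R) : rel X := fun u v => `[< ball (f u) e v >].

Definition pseudo_chain (A : set X) (e : R) (a b : X) (s : seq X) : Prop :=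
  [/\ path (pseudo_step e) a s, last a s = b, (0 < size s)%N & {subset s <= A}].

Lemma ICT_pseudo_chain (A : set X) a b e : ICT f A -> A a -> A b -> 0 < e ->
  exists s, pseudo_chain A e a b s.
Proof.
move=> ictA Aa Ab e0; have [N [c [N1 [c0 [cN [cA cstep]]]]]] := ictA a b Aa Ab e e0.
have cE i : (i <= N)%N -> nth a (a :: mkseq (c \o S) N) i = c i.
  by case: i => [|i] iN /=; rewrite ?c0 // nth_mkseq.
exists (mkseq (c \o S) N); split.
- apply/(pathP a) => i; rewrite size_mkseq => iN.
  by rewrite cE 1?ltnW // nth_mkseq //; apply/asboolP/cstep.
- by rewrite (last_nth a) size_mkseq cE.
- by rewrite size_mkseq.
- move=> x /mapP [i]; rewrite mem_iota => /andP [_ iN] ->.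
  by rewrite in_setE; apply: cA.
Qed.

Lemma ICT_loop_through (A : set X) e p (s : seq X) : ICT f A -> A p -> 0 < e ->
  {subset s <= A} -> exists2 L, pseudo_chain A e p p L & {subset s <= L}.
Proof.
move=> ictA Ap e0; elim: s => [|a s IH] sA.
  by have [L [? ? ? ?]] := ICT_pseudo_chain ictA Ap Ap e0; exists L.
have [|L [Lpath Llast Lsize LA] sL] := IH.
  by move=> b bs; apply: sA; rewrite in_cons bs orbT.
have Aa : A a by rewrite -in_setE; apply: sA; rewrite mem_head.
have [L1 [L1path L1last L1size L1A]] := ICT_pseudo_chain ictA Ap Aa e0.
have [L2 [L2path L2last L2size L2A]] := ICT_pseudo_chain ictA Aa Ap e0.
exists (L ++ L1 ++ L2); [split|].
- by rewrite !cat_path Lpath Llast L1path L1last L2path.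
- by rewrite !last_cat Llast L1last L2last.
- by rewrite !size_cat addn_gt0 Lsize.
- by move=> b; rewrite !mem_cat => /or3P [/LA|/L1A|/L2A].
move=> b; rewrite in_cons !mem_cat => /orP [/eqP -> | /sL -> //].
by case: L1 L1size L1last {L1path L1A} => [//|y L1] _ /= <-; rewrite mem_last orbT.
Qed.

Lemma compact_net (A : set X) e : compact A -> 0 < e ->
  exists s : seq X, {subset s <= A} /\ forall b, A b -> exists2 a, a \in s & ball a e b.
Proof.
(* Otherwise the sets of points of A outside the e-balls around finitely many
   points of A generate a proper filter, and a cluster point p of it in A lies
   in the closure of [uncovered [:: p]], which misses [ball p e]. *)
move=> cA e0; apply: contrapT => nonet.
pose uncovered (s : seq X) := [set b | A b /\ ~ exists2 a, a \in s & ball a e b].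
pose F := filter_from [set s : seq X | {subset s <= A}] uncovered.
have FF : ProperFilter F.
  apply: filter_from_proper; last first.
    move=> s sA; apply/set0P/negP => /eqP s0; apply: nonet.
    exists s; split => // b Ab; apply: contrapT => bs.
    by have : uncovered s b by []; rewrite s0.
  apply: filter_from_filter; first by exists [::].
  move=> s t sA tA; exists (s ++ t).
    by move=> a; rewrite mem_cat => /orP [/sA|/tA].
  by move=> b [Ab bst]; split; split => // -[a aS ab]; apply: bst; exists a;
    rewrite // mem_cat aS ?orbT.
have [|p [Ap pF]] := cA F FF; first by exists [::] => // b [].
have Fp : F (uncovered [:: p]).
  by exists [:: p] => // a; rewrite inE => /eqP ->; rewrite in_setE.
have [b [[_ bp] pb]] := pF _ _ Fp (nbhsx_ballx p e e0).
by apply: bp; exists p; rewrite ?mem_head.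
Qed.

Lemma ICT_netted_loop (A : set X) e p : compact A -> ICT f A -> A p -> 0 < e ->
  exists L, pseudo_chain A e p p L /\ forall b, A b -> exists2 a, a \in L & ball a e b.
Proof.
move=> cA ictA Ap e0; have [s [sA snet]] := compact_net cA e0.
have [L Lloop sL] := ICT_loop_through ictA Ap e0 sA.
by exists L; split => // b /snet [a /sL aL ab]; exists a.
Qed.

Definition asymptotic (u v : int -> X) : Prop :=
  forall e, 0 < e -> exists N : nat, forall i, N%:Z < `|i| -> ball (u i) e (v i).

Lemma asymptotic_sym (u v : int -> X) : asymptotic u v -> asymptotic v u.
Proof. by move=> uv e /uv [N Nuv]; exists N => i /Nuv /ball_sym. Qed.

Lemma asymptotic_opp (u v : int -> X) :
  asymptotic u v -> asymptotic (u \o -%R) (v \o -%R).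
Proof. by move=> uv e /uv [N Nuv]; exists N => i; rewrite -normrN => /Nuv. Qed.

Lemma omega_lim_asymptotic_sub (u v : int -> X) :
  asymptotic u v -> omega_lim v `<=` omega_lim u.
Proof.
move=> uv b vb M B /nbhs_ballP [e e0 eB].
have e2 : 0 < e / 2 by rewrite divr_gt0.
have [N Nuv] := uv _ e2.
have [_ [[n /= Mn <-] bv]] := vb (maxn M N) _ (nbhsx_ballx b _ e2).
exists (u n); split; first by exists n => //=; lia.
apply: eB; rewrite [e]splitr; apply: ball_triangle bv (ball_sym (Nuv n _)); lia.
Qed.

Lemma omega_lim_asymptotic (u v : int -> X) :
  asymptotic u v -> omega_lim u = omega_lim v.
Proof.
move=> uv; apply/seteqP; split; apply: omega_lim_asymptotic_sub => //.
exact: asymptotic_sym.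
Qed.

Lemma alpha_lim_omega_lim (u : int -> X) : alpha_lim u = omega_lim (u \o -%R).
Proof.
have negE (M : nat) : [set u n | n in [set n | n < - M%:Z]] =
    [set (u \o -%R) n | n in [set n | M%:Z < n]].
  by apply/seteqP; split => _ [n /= Mn <-]; exists (- n); rewrite /= ?opprK //; lia.
by apply/seteqP; split => b ub M; [rewrite -negE | rewrite negE]; exact: ub.
Qed.

Lemma alpha_lim_asymptotic (u v : int -> X) :
  asymptotic u v -> alpha_lim u = alpha_lim v.
Proof.
by move=> /asymptotic_opp uv; rewrite !alpha_lim_omega_lim (omega_lim_asymptotic uv).
Qed.

Lemma omega_lim_dense (A : set X) (u : int -> X) :
  closed A -> (forall i, A (u i)) ->
  (forall b, A b -> forall e, 0 < e -> forall M : nat,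
    exists2 n : nat, (M < n)%N & ball (u n) e b) ->
  omega_lim u = A.
Proof.
move=> clA uA uAdense; apply/seteqP; split => [b /(_ 0%N) ub | b Ab M B].
  by apply: clA; apply: closureS ub => _ [i _ <-].
move=> /nbhs_ballP [e e0 eB]; have [n Mn unb] := uAdense b Ab e e0 M.
by exists (u n); split; [exists n => //=; rewrite ltz_nat | exact/eB/ball_sym].
Qed.

(* [Negz n] is [-(n + 1)], so time [-n] carries [y' n] for [n >= 1]. *)
Definition two_sided (y y' : nat -> X) (i : int) : X :=
  match i with Posz n => y n | Negz n => y' n.+1 end.

Lemma two_sided_pseudo_orbit (delta : R) (rho : nat -> R) (y y' : nat -> X) :
  (forall n, rho n <= delta) -> (forall e, 0 < e -> \forall n \near \oo, rho n < e) ->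
  y 0%N = y' 0%N ->
  (forall n, ball (f (y n)) (rho n) (y n.+1)) ->
  (forall n, ball (f (y' n.+1)) (rho n) (y' n)) ->
  two_sided_asym_delta_pseudo_orbit f delta (two_sided y y').
Proof.
move=> rho_le rho_small y0 ystep y'step.
have stepE i : exists2 n, (`|i| <= n.+1)%N &
    ball (f (two_sided y y' i)) (rho n) (two_sided y y' (i + 1)).
  case: i => [n | [|m]]; [exists n | exists 0%N | exists m.+1] => //.
  - by rewrite (_ : Posz n + 1 = Posz n.+1); [exact: ystep | lia].
  - by rewrite (_ : Negz 0 + 1 = Posz 0) /= ?y0; [exact: y'step | lia].
  - by rewrite (_ : Negz m.+1 + 1 = Negz m); [exact: y'step | lia].
split => [e /rho_small [N _ Nrho] | i].
  exists N => i Ni; have [n ni nstep] := stepE i.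
  by apply: (le_ball _ nstep); apply/ltW/Nrho => /=; lia.
by have [n _ nstep] := stepE i; exact: (le_ball (rho_le n) nstep).
Qed.

Lemma concat_loops_near (len : nat -> nat) (p : X) (L : nat -> seq X)
    (rho : nat -> R) b e :
  (forall k, (0 < len k)%N) -> (forall k, size (L k) = len k) ->
  (forall k, last p (L k) = p) ->
  (forall k, exists2 a, a \in p :: L k & ball a (rho k) b) ->
  (\forall k \near \oo, rho k < e) ->
  forall M, exists2 n, (M < n)%N & ball (concat_loops len p L n) e b.
Proof.
move=> len_gt0 size_L L_loop Lnet rho_small M.
have [k [Mk rhok]] :=
  filter_ex (filterI (nbhs_infty_gt (loop_pos len M).1) rho_small).
have [a aL ab] := Lnet k.
have [n Mn na] := concat_loops_visit len_gt0 size_L L_loop aL Mk.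
by exists n; rewrite ?na //; exact: (le_ball (ltW rhok) ab).
Qed.

Section NettedLoops.
Variables (A : set X) (delta : R) (eps : nat -> R) (p : X) (L : nat -> seq X).
Hypotheses (clA : closed A) (Ap : A p) (eps_le : forall k, eps k <= delta)
  (eps_small : forall e, 0 < e -> \forall k \near \oo, eps k < e)
  (L_chain : forall k, pseudo_chain A (eps k) p p (L k))
  (L_net : forall k b, A b -> exists2 a, a \in L k & ball a (eps k) b).

Let len k := size (L k).
(* The loops traversed backwards, so that [y'] read from right to left is a
   pseudo-orbit. *)
Let L' k := rev (belast p (L k)).
Let y := concat_loops len p L.
Let y' := concat_loops len p L'.

Let len_gt0 k : (0 < len k)%N. Proof. by have [] := L_chain k. Qed.
Let L_loop k : last p (L k) = p. Proof. by have [] := L_chain k. Qed.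
Let size_L k : size (L k) = len k. Proof. by []. Qed.
Let size_L' k : size (L' k) = len k. Proof. by rewrite size_rev size_belast. Qed.
Let L'_loop k : last p (L' k) = p. Proof. exact: last_rev_belast. Qed.

Let L_in k a : a \in p :: L k -> A a.
Proof.
have [_ _ _ LA] := L_chain k.
by rewrite in_cons => /orP [/eqP -> // | /LA]; rewrite in_setE.
Qed.

Let L'_in k a : a \in p :: L' k -> A a.
Proof. by rewrite mem_rev_belast //; exact: L_in. Qed.

Let y_in n : A (y n).
Proof.
apply: (concat_loops_in len_gt0 size_L (P := A)) => // k a aL.
by apply: (@L_in k); rewrite in_cons aL orbT.
Qed.

Let y'_in n : A (y' n).
Proof.
apply: (concat_loops_in len_gt0 size_L' (P := A)) => // k a aL.
by apply: (@L'_in k); rewrite in_cons aL orbT.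
Qed.

Let two_sided_in i : A (two_sided y y' i).
Proof. by case: i => n; [exact: y_in | exact: y'_in]. Qed.

Let two_sided_pseudo_orbit_loops :
  two_sided_asym_delta_pseudo_orbit f delta (two_sided y y').
Proof.
apply: (two_sided_pseudo_orbit (rho := fun n => eps (loop_pos len n).1)) => //.
- by move=> e /eps_small; exact: loop_pos_fst_cvg.
- move=> n; apply/asboolP.
  apply: (concat_loops_step len_gt0 size_L L_loop (r := fun k => pseudo_step (eps k))).
  by move=> k; have [] := L_chain k.
- move=> n; apply/asboolP; apply: (concat_loops_step len_gt0 size_L' L'_loop
    (r := fun k u v => pseudo_step (eps k) v u)) => k.
  by rewrite -[X in path _ X _](L_loop k) rev_path; have [] := L_chain k.
Qed.

Let Lp_net b : A b -> forall k, exists2 a, a \in p :: L k & ball a (eps k) b.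
Proof.
by move=> Ab k; have [a aL ab] := L_net k Ab; exists a; rewrite ?in_cons ?aL ?orbT.
Qed.

Let L'p_net b : A b -> forall k, exists2 a, a \in p :: L' k & ball a (eps k) b.
Proof.
by move=> Ab k; have [a aL ab] := Lp_net Ab k; exists a; rewrite ?mem_rev_belast.
Qed.

Lemma netted_loops_pseudo_orbit : exists x,
  two_sided_asym_delta_pseudo_orbit f delta x /\ alpha_lim x = A /\ omega_lim x = A.
Proof.
exists (two_sided y y'); split; [exact: two_sided_pseudo_orbit_loops | split].
- rewrite alpha_lim_omega_lim; apply: omega_lim_dense => // [i | b Ab e e0 M].
    exact: two_sided_in.
  have [[//|n] Mn y'n] := concat_loops_near len_gt0 size_L' L'_loop
    (L'p_net Ab) (eps_small e0) M.
  by exists n.+1; rewrite //= -NegzE.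
- apply: omega_lim_dense => // b Ab e e0 M.
  exact: (concat_loops_near len_gt0 size_L L_loop (Lp_net Ab) (eps_small e0)).
Qed.

End NettedLoops.

Lemma ICT_two_sided_pseudo_orbit (A : set X) delta : compact A -> closed A ->
  A !=set0 -> ICT f A -> 0 < delta ->
  exists x, two_sided_asym_delta_pseudo_orbit f delta x /\
    alpha_lim x = A /\ omega_lim x = A.
Proof.
move=> cA clA [p Ap] ictA delta0.
pose eps k := Num.min delta k.+1%:R^-1.
have eps_gt0 k : 0 < eps k by rewrite lt_min delta0 invr_gt0 ltr0Sn.
have eps_small e : 0 < e -> \forall k \near \oo, eps k < e.
  move=> e0; apply: filterS (near_infty_natSinv_lt (PosNum e0)) => k.
  by apply: le_lt_trans; rewrite ge_min lexx orbT.
have [L /all_and2 [Lloop Lnet]] :=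
  choice (fun k => ICT_netted_loop cA ictA Ap (eps_gt0 k)).
apply: (netted_loops_pseudo_orbit clA Ap _ eps_small Lloop Lnet) => k.
by rewrite ge_min lexx.
Qed.

Lemma limit_shadowing_orbital_shadowing :
  two_sided_limit_shadowing f -> two_sided_orbital_limit_shadowing f.
Proof.
move=> lsh x x_po; have [z [z_traj zx]] := lsh x x_po.
by exists z; rewrite (alpha_lim_asymptotic zx) (omega_lim_asymptotic zx).
Qed.

Lemma orbital_shadowing_restricted : two_sided_orbital_limit_shadowing f ->
  restricted_two_sided_orbital_limit_shadowing f.
Proof. by move=> olsh; exists 1; split=> [|x [x_po _]]; [exact: ltr01 | exact: olsh]. Qed.

Lemma restricted_shadowing_Pe : compact [set: X] ->
  restricted_two_sided_orbital_limit_shadowing f -> property_Pe f.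
Proof.
move=> cX [delta [delta0 rsh]] A [A0 [clA ictA]].
have cA : compact A := subclosed_compact clA cX (@subsetT _ A).
have [x [x_po [xA Ax]]] := ICT_two_sided_pseudo_orbit cA clA A0 ictA delta0.
by have [z [z_traj [zx zx']]] := rsh x x_po; exists z; rewrite zx zx'.
Qed.

End Dynamics.

Theorem mainTheorem2 (R : realType) (X : pseudoMetricType R) (f : X -> X) :
  hausdorff_space X -> compact [set: X] -> continuous f ->
  (two_sided_limit_shadowing f \/ two_sided_orbital_limit_shadowing f \/
   restricted_two_sided_orbital_limit_shadowing f) ->
  property_Pe f.
Proof.
move=> _ cX _ shadowing; apply: restricted_shadowing_Pe cX _.
by case: shadowing => [/limit_shadowing_orbital_shadowing | []] //;
  exact: orbital_shadowing_restricted.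
Qed.
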